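(* Let $p(t)=\sum_{k=0}^\infty a_kt^k$ be a power series with $0\le a_k<1$ for all $k\ge0$ and $\sum_{k=0}^\infty a_k=1$. Let $p^{[1]}(t)=p(t)$, $p^{[n+1]}(t)=p(p^{[n]}(t))$, and write $p^{[n]}(t)=\sum_{k=0}^\infty a_k^{[n]}t^k$, $a^{[n]}=\sup\{a_k^{[n]}: k\ge1\}$. Then $(a_0^{[n]})_{n\in\mathbb N}$ is monotone increasing, $(a^{[n]})_{n\in\mathbb N}$ is monotone decreasing, and $\lim_{n\to\infty}a^{[n]}=0$.
   Context: Composition is composition of formal power series; since the coefficients are nonnegative and sum to $1$, each $p^{[n]}$ is well defined, has nonnegative coefficients, and $\sum_k a_k^{[n]}=1$. ''Monotone increasing/decreasing'' means non-strict monotonicity. *)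

From Stdlib Require Import Reals.
From Coquelicot Require Import Coquelicot.
Open Scope R_scope.

Fixpoint pow_coef (q : nat -> R) (j k : nat) : R :=
  match j with
  | O => if Nat.eqb k 0 then 1 else 0
  | S j' => sum_f_R0 (fun i => q i * pow_coef q j' (k - i)) k
  end.

(* Composition p(q(t)) = sum_j a_j q(t)^j; its coefficient of t^k is the
   series sum_j a_j [t^k] q^j (a convergent series of nonnegative terms when
   a and q have nonnegative coefficients summing to 1). *)
Definition comp_coef (a q : nat -> R) (k : nat) : R :=
  Series (fun j => a j * pow_coef q j k).

(* piter a n = coefficients of p^[n+1] : piter a 0 = p, piter a (n+1) = p o piter a n. *)
Fixpoint piter (a : nat -> R) (n : nat) : nat -> R :=
  match n with
  | O => a
  | S m => comp_coef a (piter a m)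
  end.

Definition sup_pos_coef (c : nat -> R) : Rbar :=
  Sup_seq (fun k => Finite (c (S k))).

From Stdlib Require Import Reals Lra Lia Classical.
From Coquelicot Require Import Coquelicot.
Open Scope R_scope.

(* Everything is read off generating functions; write [c = p^[n]] and [x = c_0].
   Since [p^[n+1](0) = p(x)] and [p] is increasing, [a_0^[n]] increases.  The coefficient of
   [t^k], [k >= 1], in [c^j] is at most [a^[n] (1 + x + ... + x^(j-1))], so summing against [p]
   gives [a^[n+1] <= a^[n] (1 - p(x)) / (1 - x) <= a^[n]], because [x <= p(x)].
   For the limit, [p^[n+1] = p^[n] o p] has coefficients [sum_j c_j [t^k] p^j].  Splitting [p] at
   two of its atoms [u < v] as [al (t^u + t^v) / 2 + (1 - al) q] exhibits [p^j] as a binomial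
   mixture of convolutions with fair binomial laws, whose point masses are at most
   [C(l, l/2) / 2^l = O(l^(-1/2))]; hence [sup_k [t^k] p^j -> 0].  The remaining mass
   [c_1 + ... + c_(J-1)] is at most [(c(t) - c_0) / t^J], which is small for some [n]: with
   [t = a_0 > 0] it is an increment of the bounded sequence [a_0^[n]], and if [a_0 = 0] the
   iterates contract near [t = 1/2]. *)

(** * Series of nonnegative terms *)

Lemma is_series_Rmult_l (c : R) (a : nat -> R) (l : R) :
  is_series a l -> is_series (fun n => c * a n) (c * l).
Proof. exact (is_series_scal_l c a l). Qed.

Lemma is_series_partial_le (a : nat -> R) (l : R) :
  (forall n, 0 <= a n) -> is_series a l -> forall n, sum_f_R0 a n <= l.
Proof.
  intros Ha Hs n. apply growing_ineq.
  - intros m. simpl. specialize (Ha (S m)). lra.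
  - now apply is_series_Reals.
Qed.

Lemma is_series_term_le (a : nat -> R) (l : R) (n : nat) :
  (forall k, 0 <= a k) -> is_series a l -> a n <= l.
Proof.
  intros Ha Hs. apply Rle_trans with (sum_f_R0 a n); [|now apply is_series_partial_le].
  destruct n as [|n]; simpl; [lra|].
  assert (0 <= sum_f_R0 a n) by (apply cond_pos_sum; auto).
  specialize (Ha (S n)). lra.
Qed.

Lemma is_series_nonneg (a : nat -> R) (l : R) :
  (forall k, 0 <= a k) -> is_series a l -> 0 <= l.
Proof.
  intros Ha Hs. apply Rle_trans with (a 0%nat); [apply Ha|]. now apply is_series_term_le.
Qed.

Lemma is_series_le (a b : nat -> R) (la lb : R) :
  (forall n, a n <= b n) -> is_series a la -> is_series b lb -> la <= lb.
Proof.
  intros Hab Ha Hb. apply (is_lim_seq_le (sum_n a) (sum_n b) la lb); auto.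
  intros n. rewrite !sum_n_Reals. now apply sum_Rle.
Qed.

Lemma is_series_le_of_partial_le (a : nat -> R) (l M : R) :
  is_series a l -> (forall n, sum_f_R0 a n <= M) -> l <= M.
Proof.
  intros Hs HM. apply (is_lim_seq_le (sum_n a) (fun _ => M) l M); [|exact Hs|apply is_lim_seq_const].
  intros n. now rewrite sum_n_Reals.
Qed.

Lemma ex_series_of_partial_le (a : nat -> R) (M : R) :
  (forall n, 0 <= a n) -> (forall n, sum_f_R0 a n <= M) -> ex_series a /\ Series a <= M.
Proof.
  intros Ha HM.
  destruct (growing_cv (sum_f_R0 a)) as [l Hl].
  - intros n. simpl. specialize (Ha (S n)). lra.
  - exists M. intros x [n ->]. auto.
  - apply is_series_Reals in Hl. split; [now exists l|].
    rewrite (is_series_unique a l Hl). now apply (is_series_le_of_partial_le a).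
Qed.

Lemma ex_series_le_nonneg (a b : nat -> R) :
  (forall n, 0 <= a n <= b n) -> ex_series b -> ex_series a.
Proof.
  intros Hab Hb. apply (ex_series_le a b); [|exact Hb].
  intros n. rewrite Rabs_pos_eq; apply Hab.
Qed.

Lemma is_series_sum_f_R0 (f : nat -> nat -> R) (L : nat -> R) (N : nat) :
  (forall i, is_series (f i) (L i)) ->
  is_series (fun k => sum_f_R0 (fun i => f i k) N) (sum_f_R0 L N).
Proof.
  intros Hf. induction N as [|N IH]; simpl; [apply Hf|].
  apply (is_series_plus (fun k => sum_f_R0 (fun i => f i k) N) (f (S N))); auto.
Qed.

Lemma is_series_swap_nonneg (u : nat -> nat -> R) (U : nat -> R) (S : R) :
  (forall j k, 0 <= u j k) -> (forall j, is_series (u j) (U j)) -> is_series U S ->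
  is_series (fun k => Series (fun j => u j k)) S.
Proof.
  intros Hu HU HS.
  assert (Hcol : forall k, is_series (fun j => u j k) (Series (fun j => u j k))).
  { intros k. apply Series_correct, (ex_series_le_nonneg _ U); [|now exists S].
    intros j. split; [apply Hu|]. exact (is_series_term_le _ _ k (Hu j) (HU j)). }
  set (V := fun k => Series (fun j => u j k)).
  assert (HV0 : forall k, 0 <= V k) by (intros k; exact (is_series_nonneg _ _ (fun j => Hu j k) (Hcol k))).
  assert (HVS : forall K, sum_f_R0 V K <= S).
  { intros K. apply (is_series_le _ _ _ _ (fun j => is_series_partial_le _ _ (Hu j) (HU j) K)).
    - exact (is_series_sum_f_R0 (fun k j => u j k) V K Hcol).
    - exact HS. }
  destruct (ex_series_of_partial_le V S HV0 HVS) as [HVe HVle].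
  assert (HSV : S <= Series V).
  { apply (is_series_le_of_partial_le U _ _ HS). intros J.
    apply (is_series_le _ _ _ _ (fun k => is_series_partial_le _ _ (fun j => Hu j k) (Hcol k) J)).
    - exact (is_series_sum_f_R0 u U J HU).
    - now apply Series_correct. }
  replace S with (Series V) by lra. now apply Series_correct.
Qed.

(** * Distributions and generating functions *)

Definition dirac (m k : nat) : R := if Nat.eqb k m then 1 else 0.

Lemma dirac_nonneg m k : 0 <= dirac m k.
Proof. unfold dirac. destruct (Nat.eqb k m); lra. Qed.

Lemma sum_dirac m n : sum_f_R0 (dirac m) n = if Nat.leb m n then 1 else 0.
Proof.
  induction n as [|n IH]; simpl.
  - unfold dirac. now destruct m.
  - rewrite IH. unfold dirac.
    destruct (Nat.leb_spec m n), (Nat.eqb_spec (S n) m), (Nat.leb_spec m (S n)); try lia; lra.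
Qed.

Lemma is_series_dirac m : is_series (dirac m) 1.
Proof.
  apply is_series_Reals. intros eps Heps. exists m. intros n Hn.
  rewrite sum_dirac. replace (Nat.leb m n) with true by (symmetry; apply Nat.leb_le; lia).
  unfold Rdist. rewrite Rminus_diag, Rabs_R0. lra.
Qed.

Lemma is_series_dirac_pow m x t : is_series (fun k => x * dirac m k * t ^ k) (x * t ^ m).
Proof.
  apply (is_series_ext (fun k => dirac m k * (x * t ^ m))).
  - intros k. unfold dirac. destruct (Nat.eqb_spec k m) as [->|]; simpl; ring.
  - rewrite <- (Rmult_1_l (x * t ^ m)) at 1. apply is_series_scal_r, is_series_dirac.
Qed.

Definition is_distr (c : nat -> R) : Prop := (forall k, 0 <= c k) /\ is_series c 1.

Lemma is_distr_le1 c k : is_distr c -> 0 <= c k <= 1.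
Proof. intros [Hc Hs]. split; [apply Hc|]. exact (is_series_term_le c 1 k Hc Hs). Qed.

Lemma is_distr_dirac m : is_distr (dirac m).
Proof. split; [apply dirac_nonneg|apply is_series_dirac]. Qed.

Definition pgf (c : nat -> R) (t : R) : R := Series (fun k => c k * t ^ k).

Lemma pow_le1 x n : 0 <= x <= 1 -> x ^ n <= 1.
Proof. intros Hx. rewrite <- (pow1 n). apply pow_incr. lra. Qed.

Lemma Rle_pow_le1 x m n : 0 <= x <= 1 -> (m <= n)%nat -> x ^ n <= x ^ m.
Proof.
  intros Hx Hmn. replace n with (m + (n - m))%nat by lia. rewrite pow_add.
  pose proof (pow_le x m (proj1 Hx)). pose proof (pow_le1 x (n - m) Hx). nra.
Qed.

Lemma pgf_is_series c t : is_distr c -> 0 <= t <= 1 -> is_series (fun k => c k * t ^ k) (pgf c t).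
Proof.
  intros [Hc Hs] Ht. apply Series_correct, (ex_series_le_nonneg _ c); [|now exists 1].
  intros k. assert (0 <= t ^ k <= 1) by (split; [apply pow_le|apply pow_le1]; lra).
  specialize (Hc k). split; nra.
Qed.

Lemma pgf_bounds c t : is_distr c -> 0 <= t <= 1 -> 0 <= pgf c t <= 1.
Proof.
  intros Hd Ht. pose proof (pgf_is_series c t Hd Ht) as H. destruct Hd as [Hc Hs].
  assert (Hk : forall k, 0 <= t ^ k <= 1) by (split; [apply pow_le|apply pow_le1]; lra).
  split.
  - apply (is_series_nonneg (fun k => c k * t ^ k)); [|exact H].
    intros k. apply Rmult_le_pos; [apply Hc|apply Hk].
  - apply (is_series_le (fun k => c k * t ^ k) c); [|exact H|exact Hs].
    intros k. specialize (Hc k). specialize (Hk k). nra.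
Qed.

Lemma pgf_1 c : is_distr c -> pgf c 1 = 1.
Proof.
  intros [Hc Hs]. unfold pgf. transitivity (Series c); [|now apply is_series_unique].
  apply Series_ext. intros k. rewrite pow1. ring.
Qed.

Lemma pgf_0 c : is_distr c -> pgf c 0 = c 0%nat.
Proof.
  intros Hd. pose proof (is_series_dirac_pow 0 (c 0%nat) 0) as H.
  rewrite pow_O, Rmult_1_r in H.
  apply is_series_unique. refine (is_series_ext _ _ _ _ H).
  intros [|k]; unfold dirac; simpl; ring.
Qed.

Lemma pgf_le c x y : is_distr c -> 0 <= x <= y -> y <= 1 -> pgf c x <= pgf c y.
Proof.
  intros Hd Hxy Hy.
  apply (is_series_le (fun k => c k * x ^ k) (fun k => c k * y ^ k));
    [|apply pgf_is_series; auto; lra..].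
  intros k. apply Rmult_le_compat_l; [apply Hd|apply pow_incr; lra].
Qed.

Lemma pgf_ge_coef0 c x : is_distr c -> 0 <= x <= 1 -> c 0%nat <= pgf c x.
Proof.
  intros Hd Hx. rewrite <- (pgf_0 c Hd). apply pgf_le; auto; lra.
Qed.

Lemma pgf_le_chord c x : is_distr c -> 0 <= x <= 1 -> pgf c x <= c 0%nat + x * (1 - c 0%nat).
Proof.
  intros Hd Hx. pose proof Hd as [Hc Hs].
  pose proof (is_series_Rmult_l (c 0%nat) _ _ (is_series_dirac 0)) as H0.
  replace (c 0%nat + x * (1 - c 0%nat)) with (c 0%nat * 1 + x * (1 - c 0%nat * 1)) by ring.
  apply (is_series_le (fun k => c k * x ^ k)
           (fun k => c 0%nat * dirac 0 k + x * (c k - c 0%nat * dirac 0 k)));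
    [|apply pgf_is_series; auto|].
  - intros [|k]; unfold dirac; simpl; [lra|].
    pose proof (Rle_pow_le1 x 1 (S k) Hx ltac:(lia)) as Hxk. simpl in Hxk.
    specialize (Hc (S k)). nra.
  - exact (is_series_plus _ _ _ _ H0 (is_series_Rmult_l x _ _ (is_series_minus _ _ _ _ Hs H0))).
Qed.

Definition conv (f g : nat -> R) (k : nat) : R := sum_f_R0 (fun i => f i * g (k - i)%nat) k.

Lemma conv_nonneg f g k : (forall i, 0 <= f i) -> (forall i, 0 <= g i) -> 0 <= conv f g k.
Proof. intros Hf Hg. apply cond_pos_sum. intros i. now apply Rmult_le_pos. Qed.

Lemma is_series_conv f g F G t : (forall k, 0 <= f k) -> (forall k, 0 <= g k) -> 0 <= t ->
  is_series (fun k => f k * t ^ k) F -> is_series (fun k => g k * t ^ k) G ->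
  is_series (fun k => conv f g k * t ^ k) (F * G).
Proof.
  intros Hf Hg Ht HF HG.
  apply (is_series_ext (fun k => sum_f_R0 (fun i => (f i * t ^ i) * (g (k - i)%nat * t ^ (k - i))) k)).
  - intros k. unfold conv. simpl. rewrite (Rmult_comm (sum_f_R0 _ _)), scal_sum.
    apply sum_eq. intros i Hi.
    replace (t ^ k) with (t ^ i * t ^ (k - i)) by (rewrite <- pow_add; f_equal; lia). ring.
  - apply (is_series_mult_pos (fun i => f i * t ^ i) (fun i => g i * t ^ i)); auto;
      intros k; apply Rmult_le_pos; auto; now apply pow_le.
Qed.

Lemma sum_f_R0_rev (f : nat -> R) N : sum_f_R0 (fun i => f (N - i)%nat) N = sum_f_R0 f N.
Proof.
  revert f. induction N as [|N IH]; intros f; [reflexivity|].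
  rewrite decomp_sum by lia. simpl pred.
  rewrite (sum_eq _ (fun i => f (N - i)%nat)) by (intros; f_equal; lia).
  rewrite IH. simpl. replace (S N - 0)%nat with (S N) by lia. ring.
Qed.

Lemma conv_le f g H k : (forall i, 0 <= f i <= H) -> is_distr g -> conv f g k <= H.
Proof.
  intros Hf [Hg Hs]. apply Rle_trans with (sum_f_R0 (fun i => g (k - i)%nat * H) k).
  - apply sum_Rle. intros i _. specialize (Hf i). specialize (Hg (k - i)%nat). nra.
  - rewrite <- scal_sum, (sum_f_R0_rev g k).
    assert (sum_f_R0 g k <= 1) by exact (is_series_partial_le g 1 Hg Hs k).
    assert (0 <= H) by (specialize (Hf 0%nat); lra). nra.
Qed.

Lemma pow_coef_S c j k : pow_coef c (S j) k = conv c (pow_coef c j) k.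
Proof. reflexivity. Qed.

Lemma pow_coef_ext c c' j k : (forall i, c i = c' i) -> pow_coef c j k = pow_coef c' j k.
Proof.
  intros Hc. revert k. induction j as [|j IH]; intros k; [reflexivity|].
  rewrite !pow_coef_S. apply sum_eq. intros i _. now rewrite Hc, IH.
Qed.

Lemma pow_coef_nonneg c j k : (forall i, 0 <= c i) -> 0 <= pow_coef c j k.
Proof.
  intros Hc. revert k. induction j as [|j IH]; intros k.
  - simpl. destruct (Nat.eqb k 0); lra.
  - now apply conv_nonneg.
Qed.

Lemma pow_coef_0 c j : pow_coef c j 0 = c 0%nat ^ j.
Proof. induction j as [|j IH]; simpl; [reflexivity|]. rewrite IH. ring. Qed.

Lemma is_series_pow_coef c j t : is_distr c -> 0 <= t <= 1 ->
  is_series (fun k => pow_coef c j k * t ^ k) (pgf c t ^ j).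
Proof.
  intros Hd Ht. induction j as [|j IH].
  - simpl. refine (is_series_ext _ _ _ _ (is_series_dirac 0)).
    intros [|k]; unfold dirac; simpl; ring.
  - apply is_series_conv; [apply Hd|intros; apply pow_coef_nonneg, Hd|lra|apply pgf_is_series|]; auto.
Qed.

Lemma is_distr_pow_coef c j : is_distr c -> is_distr (pow_coef c j).
Proof.
  intros Hd. split; [intros; apply pow_coef_nonneg, Hd|].
  pose proof (is_series_pow_coef c j 1 Hd ltac:(lra)) as H.
  rewrite pgf_1, pow1 in H by exact Hd.
  refine (is_series_ext _ _ _ _ H). intros k. simpl. rewrite pow1. ring.
Qed.

Lemma ex_series_comp_coef a c k : is_distr a -> is_distr c ->
  ex_series (fun j => a j * pow_coef c j k).
Proof.
  intros Ha Hc. apply (ex_series_le_nonneg _ a); [|exists 1; apply Ha].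
  intros j. pose proof (is_distr_le1 _ k (is_distr_pow_coef c j Hc)). pose proof (proj1 Ha j).
  split; nra.
Qed.

Lemma is_series_comp_coef a c t : is_distr a -> is_distr c -> 0 <= t <= 1 ->
  is_series (fun k => comp_coef a c k * t ^ k) (pgf a (pgf c t)).
Proof.
  intros Ha Hc Ht.
  pose proof (is_series_swap_nonneg (fun j k => a j * (pow_coef c j k * t ^ k))
    (fun j => a j * pgf c t ^ j) (pgf a (pgf c t))) as H.
  refine (is_series_ext _ _ _ _ (H _ _ _)).
  - intros k. unfold comp_coef. rewrite <- Series_scal_r. apply Series_ext. intros j. ring.
  - intros j k. apply Rmult_le_pos; [apply Ha|].
    apply Rmult_le_pos; [apply pow_coef_nonneg, Hc|apply pow_le; lra].
  - intros j. apply (is_series_Rmult_l (a j) (fun k => pow_coef c j k * t ^ k)).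
    now apply is_series_pow_coef.
  - now apply pgf_is_series, pgf_bounds.
Qed.

Lemma pgf_comp_coef a c t : is_distr a -> is_distr c -> 0 <= t <= 1 ->
  pgf (comp_coef a c) t = pgf a (pgf c t).
Proof. intros Ha Hc Ht. now apply is_series_unique, is_series_comp_coef. Qed.

Lemma is_distr_comp_coef a c : is_distr a -> is_distr c -> is_distr (comp_coef a c).
Proof.
  intros Ha Hc. split.
  - intros k. apply (is_series_nonneg (fun j => a j * pow_coef c j k)).
    + intros j. apply Rmult_le_pos; [apply Ha|apply pow_coef_nonneg, Hc].
    + now apply Series_correct, ex_series_comp_coef.
  - pose proof (is_series_comp_coef a c 1 Ha Hc ltac:(lra)) as H.
    rewrite !pgf_1 in H by assumption.
    refine (is_series_ext _ _ _ _ H). intros k. simpl. rewrite pow1. ring.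
Qed.

Lemma comp_coef_0 a c : comp_coef a c 0 = pgf a (c 0%nat).
Proof. apply Series_ext. intros j. now rewrite pow_coef_0. Qed.

Lemma eq0_of_Rabs_le_lin x K : (forall t, 0 < t <= / 2 -> Rabs x <= K * t) -> x = 0.
Proof.
  intros H. destruct (Req_dec x 0) as [|Hx]; [assumption|exfalso].
  assert (Hpos : 0 < Rabs x) by now apply Rabs_pos_lt.
  assert (HK : 0 < K) by (specialize (H (/ 2) ltac:(lra)); nra).
  set (t := Rmin (/ 2) (Rabs x / (2 * K))).
  assert (Ht : 0 < t <= / 2).
  { split; [apply Rmin_pos; [lra|apply Rdiv_lt_0_compat; lra]|apply Rmin_l]. }
  assert (Hle : K * t <= K * (Rabs x / (2 * K))) by (apply Rmult_le_compat_l; [lra|apply Rmin_r]).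
  replace (K * (Rabs x / (2 * K))) with (Rabs x / 2) in Hle by (field; lra).
  specialize (H t Ht). lra.
Qed.

Lemma ex_series_Rabs_bounded_pow (w : nat -> R) M t :
  (forall k, Rabs (w k) <= M) -> 0 <= t < 1 -> ex_series (fun k => Rabs (w k * t ^ k)).
Proof.
  intros HM Ht. apply (ex_series_le_nonneg _ (fun k => M * t ^ k)).
  - intros k. split; [apply Rabs_pos|]. rewrite Rabs_mult, (Rabs_pos_eq (t ^ k)) by (apply pow_le; lra).
    apply Rmult_le_compat_r; [apply pow_le; lra|apply HM].
  - exists (M * / (1 - t)). apply (is_series_Rmult_l M (fun k => t ^ k)).
    apply is_series_geom. rewrite Rabs_pos_eq; lra.
Qed.

(* If [w] vanishes below [m], then [w m t^m] equals minus the tail of the series, which is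
   [O(t^(m+1))]. *)
Lemma power_series_lowest_coef_le (w : nat -> R) M m t :
  (forall k, Rabs (w k) <= M) -> (forall i, (i < m)%nat -> w i = 0) -> 0 < t < 1 ->
  Series (fun k => w k * t ^ k) = 0 -> Rabs (w m) * (1 - t) <= M * t.
Proof.
  intros HM Hlow Ht H0.
  set (T := Series (fun k => w (S m + k)%nat * t ^ (S m + k))).
  assert (HwT : w m * t ^ m = - T).
  { pose proof (ex_series_Rabs_bounded_pow w M t HM ltac:(lra)) as Habs.
    rewrite (Series_incr_n _ (S m) ltac:(lia) (ex_series_Rabs _ Habs)) in H0.
    simpl pred in H0. fold T in H0. destruct m as [|m]; simpl in H0 |- *; [lra|].
    rewrite (sum_eq _ (fun _ => 0)) in H0 by (intros i Hi; rewrite Hlow by lia; ring).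
    rewrite sum_cte in H0. lra. }
  assert (HT : Rabs T <= M * t ^ S m / (1 - t)).
  { assert (Hbound : forall k, 0 <= Rabs (w (S m + k)%nat * t ^ (S m + k)) <= M * t ^ S m * t ^ k).
    { intros k. split; [apply Rabs_pos|].
      rewrite Rabs_mult, (Rabs_pos_eq (t ^ _)), pow_add by (apply pow_le; lra).
      rewrite Rmult_assoc. apply Rmult_le_compat_r; [apply Rmult_le_pos; apply pow_le; lra|apply HM]. }
    assert (Hgeom : ex_series (fun k => M * t ^ S m * t ^ k)).
    { exists (M * t ^ S m * / (1 - t)). apply (is_series_Rmult_l (M * t ^ S m) (fun k => t ^ k)).
      apply is_series_geom. rewrite Rabs_pos_eq; lra. }
    unfold T. eapply Rle_trans; [apply Series_Rabs, (ex_series_le_nonneg _ _ Hbound Hgeom)|].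
    eapply Rle_trans; [apply (Series_le _ _ Hbound Hgeom)|].
    rewrite Series_scal_l, Series_geom by (rewrite Rabs_pos_eq; lra). right. field. lra. }
  assert (Htm : 0 < t ^ m) by (apply pow_lt; lra).
  rewrite <- Rabs_Ropp, <- HwT, Rabs_mult, (Rabs_pos_eq (t ^ m)) in HT by lra.
  simpl in HT. apply (Rmult_le_reg_r (t ^ m / (1 - t))); [apply Rdiv_lt_0_compat; lra|].
  replace (Rabs (w m) * (1 - t) * (t ^ m / (1 - t))) with (Rabs (w m) * t ^ m) by (field; lra).
  replace (M * t * (t ^ m / (1 - t))) with (M * (t * t ^ m) / (1 - t)) by (field; lra).
  exact HT.
Qed.

Lemma power_series_eq0 (w : nat -> R) M : (forall k, Rabs (w k) <= M) ->
  (forall t, 0 < t < 1 -> Series (fun k => w k * t ^ k) = 0) -> forall k, w k = 0.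
Proof.
  intros HM H0 k. induction k as [k IH] using (well_founded_induction Wf_nat.lt_wf).
  apply (eq0_of_Rabs_le_lin _ (2 * M)). intros t Ht.
  pose proof (power_series_lowest_coef_le w M k t HM IH ltac:(lra) (H0 t ltac:(lra))).
  pose proof (Rabs_pos (w k)). nra.
Qed.

Lemma distr_eq_of_pgf u v : is_distr u -> is_distr v ->
  (forall t, 0 < t < 1 -> pgf u t = pgf v t) -> forall k, u k = v k.
Proof.
  intros Hu Hv Huv k. cut (u k - v k = 0); [lra|].
  apply (power_series_eq0 (fun k => u k - v k) 2).
  - intros i. pose proof (is_distr_le1 u i Hu). pose proof (is_distr_le1 v i Hv).
    apply Rabs_le. lra.
  - intros t Ht.
    rewrite (Series_ext _ (fun k => u k * t ^ k - v k * t ^ k)) by (intros; ring).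
    rewrite Series_minus by (eexists; apply pgf_is_series; auto; lra).
    fold (pgf u t) (pgf v t). rewrite Huv by exact Ht. ring.
Qed.

Lemma pgf_dirac m t : pgf (dirac m) t = t ^ m.
Proof.
  apply is_series_unique. rewrite <- (Rmult_1_l (t ^ m)).
  refine (is_series_ext _ _ _ _ (is_series_dirac_pow m 1 t)). intros k. simpl. ring.
Qed.

Lemma pgf_pow_coef c j t : is_distr c -> 0 <= t <= 1 -> pgf (pow_coef c j) t = pgf c t ^ j.
Proof. intros Hc Ht. now apply is_series_unique, is_series_pow_coef. Qed.

Lemma is_distr_conv f g : is_distr f -> is_distr g -> is_distr (conv f g).
Proof.
  intros Hf Hg. split; [intros k; apply conv_nonneg; [apply Hf|apply Hg]|].
  pose proof (is_series_conv f g _ _ 1 (proj1 Hf) (proj1 Hg) ltac:(lra)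
    (pgf_is_series f 1 Hf ltac:(lra)) (pgf_is_series g 1 Hg ltac:(lra))) as H.
  rewrite !pgf_1, Rmult_1_l in H by assumption.
  refine (is_series_ext _ _ _ _ H). intros k. simpl. rewrite pow1. ring.
Qed.

Lemma pgf_conv f g t : is_distr f -> is_distr g -> 0 <= t <= 1 -> pgf (conv f g) t = pgf f t * pgf g t.
Proof.
  intros Hf Hg Ht.
  apply is_series_unique, is_series_conv; [apply Hf|apply Hg|lra|apply pgf_is_series; auto..].
Qed.

Lemma pow_coef_dirac m l k : pow_coef (dirac m) l k = dirac (m * l) k.
Proof.
  revert k. apply distr_eq_of_pgf; [apply is_distr_pow_coef, is_distr_dirac|apply is_distr_dirac|].
  intros t Ht. rewrite pgf_pow_coef, !pgf_dirac by (auto using is_distr_dirac; lra).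
  now rewrite pow_mult.
Qed.

Lemma conv_dirac p q k : conv (dirac p) (dirac q) k = dirac (p + q) k.
Proof.
  revert k. apply distr_eq_of_pgf; [apply is_distr_conv; apply is_distr_dirac|apply is_distr_dirac|].
  intros t Ht. rewrite pgf_conv, !pgf_dirac by (auto using is_distr_dirac; lra).
  now rewrite pow_add.
Qed.

(** * Monotonicity of the iterates *)

Lemma is_distr_piter a n : is_distr a -> is_distr (piter a n).
Proof. intros Ha. induction n as [|n IH]; [exact Ha|]. now apply is_distr_comp_coef. Qed.

Lemma pgf_piter a n t : is_distr a -> 0 <= t <= 1 -> pgf (piter a n) t = Nat.iter (S n) (pgf a) t.
Proof.
  intros Ha Ht. induction n as [|n IH]; [reflexivity|].
  simpl piter. rewrite pgf_comp_coef, IH by auto using is_distr_piter. reflexivity.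
Qed.

Lemma iter_pgf_bounds a m t : is_distr a -> 0 <= t <= 1 -> 0 <= Nat.iter m (pgf a) t <= 1.
Proof. intros Ha Ht. apply Nat.iter_invariant; [|exact Ht]. intros x Hx. now apply pgf_bounds. Qed.

(* By definition [p^[n+2] = p o p^[n+1]]; the other association follows from uniqueness of
   generating functions. *)
Lemma piter_S_comp_coef a n k : is_distr a -> piter a (S n) k = comp_coef (piter a n) a k.
Proof.
  intros Ha. pose proof (is_distr_piter a n Ha) as Hc.
  apply distr_eq_of_pgf; [now apply is_distr_piter|now apply is_distr_comp_coef|].
  intros t Ht. assert (0 <= pgf a t <= 1) by (apply pgf_bounds; auto; lra).
  rewrite pgf_comp_coef, !pgf_piter by (auto; lra).
  now rewrite Nat.iter_succ_r.
Qed.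

Lemma piter_S_coef0 a n : piter a (S n) 0%nat = pgf a (piter a n 0%nat).
Proof. apply comp_coef_0. Qed.

Lemma piter_coef0_le_succ a n : is_distr a -> piter a n 0%nat <= piter a (S n) 0%nat.
Proof.
  intros Ha. induction n as [|n IH].
  - rewrite piter_S_coef0. apply pgf_ge_coef0; [exact Ha|apply is_distr_le1, Ha].
  - rewrite (piter_S_coef0 a (S n)), (piter_S_coef0 a n) at 1.
    pose proof (is_distr_le1 _ 0 (is_distr_piter a n Ha)).
    pose proof (is_distr_le1 _ 0 (is_distr_piter a (S n) Ha)).
    apply pgf_le; [exact Ha|lra|lra].
Qed.

Lemma piter_coef0_lt1 a n : is_distr a -> a 0%nat < 1 -> piter a n 0%nat < 1.
Proof.
  intros Ha Ha0. induction n as [|n IH]; [exact Ha0|].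
  pose proof (is_distr_le1 _ 0 (is_distr_piter a n Ha)).
  rewrite piter_S_coef0. eapply Rle_lt_trans; [apply pgf_le_chord; auto; lra|].
  nra.
Qed.

Lemma Sup_seq_le_bound (u : nat -> R) M :
  (forall k, u k <= M) -> Rbar_le (Sup_seq (fun k => Finite (u k))) (Finite M).
Proof.
  intros H. apply (is_sup_seq_lub _ _ (Sup_seq_correct _)). intros x [k ->]. apply H.
Qed.

Lemma sup_pos_coef_finite c : is_distr c -> is_finite (sup_pos_coef c).
Proof.
  intros Hc. unfold sup_pos_coef.
  pose proof (Sup_seq_minor_le (fun k => Finite (c (S k))) (c 1%nat) 0 (Rle_refl _)) as Hlo.
  pose proof (Sup_seq_le_bound (fun k => c (S k)) 1 (fun k => proj2 (is_distr_le1 c (S k) Hc))) as Hhi.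
  destruct (Sup_seq (fun k => Finite (c (S k)))); easy.
Qed.

Lemma sup_pos_coef_ge c k : is_distr c -> c (S k) <= real (sup_pos_coef c).
Proof.
  intros Hc. pose proof (Sup_seq_minor_le (fun k => Finite (c (S k))) (c (S k)) k (Rle_refl _)) as H.
  change (Rbar_le (c (S k)) (sup_pos_coef c)) in H.
  now rewrite <- (sup_pos_coef_finite c Hc) in H.
Qed.

Lemma sup_pos_coef_le c M : is_distr c -> (forall k, c (S k) <= M) -> real (sup_pos_coef c) <= M.
Proof.
  intros Hc HM. pose proof (Sup_seq_le_bound (fun k => c (S k)) M HM) as H.
  change (Rbar_le (sup_pos_coef c) M) in H.
  now rewrite <- (sup_pos_coef_finite c Hc) in H.
Qed.

(* Writing [x = c_0], the coefficient of [t^(k+1)] in [c^j] collects at most [1 + x + ... + x^(j-1)]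
   contributions of size at most [s]. *)
Lemma pow_coef_pos_le c s j k : is_distr c -> (forall i, c (S i) <= s) ->
  (1 - c 0%nat) * pow_coef c j (S k) <= s * (1 - c 0%nat ^ j).
Proof.
  intros Hc Hs. pose proof (is_distr_le1 c 0 Hc) as Hx.
  revert k. induction j as [|j IH]; intros k; [simpl; lra|].
  rewrite pow_coef_S. unfold conv. rewrite decomp_sum by lia. simpl pred.
  replace (S k - 0)%nat with (S k) by lia.
  assert (Htail : sum_f_R0 (fun i => c (S i) * pow_coef c j (S k - S i)) k <= s).
  { apply (conv_le (fun i => c (S i)) (pow_coef c j) s k); [|now apply is_distr_pow_coef].
    intros i. split; [apply Hc|apply Hs]. }
  specialize (IH k). simpl pow.
  assert (0 <= c 0%nat * ((1 - c 0%nat) * pow_coef c j (S k))) by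
    (apply Rmult_le_pos; [lra|apply Rmult_le_pos; [lra|apply pow_coef_nonneg, Hc]]).
  nra.
Qed.

(* Summing against [a]: [(1 - x) (a o c)_(k+1) <= s (1 - a(x)) <= s (1 - x)] when [x <= a(x)]. *)
Lemma comp_coef_pos_le a c s k : is_distr a -> is_distr c -> c 0%nat < 1 ->
  c 0%nat <= pgf a (c 0%nat) -> (forall i, c (S i) <= s) -> comp_coef a c (S k) <= s.
Proof.
  intros Ha Hc Hx1 Hfix Hs. pose proof (is_distr_le1 c 0 Hc) as Hx.
  assert (Hs0 : 0 <= s) by (pose proof (is_distr_le1 c 1 Hc); specialize (Hs 0%nat); lra).
  assert (H : (1 - c 0%nat) * comp_coef a c (S k) <= s * (1 - pgf a (c 0%nat))).
  { apply (is_series_le (fun j => (1 - c 0%nat) * (a j * pow_coef c j (S k)))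
                        (fun j => s * (a j - a j * c 0%nat ^ j))).
    - intros j. pose proof (pow_coef_pos_le c s j k Hc Hs). pose proof (proj1 Ha j). nra.
    - exact (is_series_Rmult_l _ _ _ (Series_correct _ (ex_series_comp_coef a c (S k) Ha Hc))).
    - exact (is_series_Rmult_l s _ _ (is_series_minus _ _ _ _ (proj2 Ha) (pgf_is_series a _ Ha Hx))). }
  nra.
Qed.

Lemma sup_pos_coef_piter_succ_le a n : is_distr a -> a 0%nat < 1 ->
  real (sup_pos_coef (piter a (S n))) <= real (sup_pos_coef (piter a n)).
Proof.
  intros Ha Ha0. apply sup_pos_coef_le; [now apply is_distr_piter|]. intros k.
  apply comp_coef_pos_le; auto using is_distr_piter.
  - now apply piter_coef0_lt1.
  - rewrite <- piter_S_coef0. apply piter_coef0_le_succ, Ha.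
  - intros i. apply sup_pos_coef_ge, is_distr_piter, Ha.
Qed.

(** * Anticoncentration of convolution powers *)

Lemma central_binom_half_succ N :
  Binomial.C (2 * S N) (S N) * (/ 2) ^ (2 * S N) =
  Binomial.C (2 * N) N * (/ 2) ^ (2 * N) * ((2 * INR N + 1) / (2 * INR N + 2)).
Proof.
  unfold Binomial.C.
  replace (2 * S N - S N)%nat with (S N) by lia. replace (2 * N - N)%nat with N by lia.
  replace (2 * S N)%nat with (S (S (2 * N))) by lia.
  rewrite !fact_simpl, !mult_INR, !S_INR, mult_INR. simpl pow. simpl INR.
  pose proof (INR_fact_neq_0 N). pose proof (INR_fact_neq_0 (2 * N)). pose proof (pos_INR N).
  field. repeat split; lra.
Qed.

Lemma central_binom_half_sq_le N :
  (Binomial.C (2 * N) N * (/ 2) ^ (2 * N)) ^ 2 * (2 * INR N + 1) <= 1.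
Proof.
  induction N as [|N IH]; [simpl; unfold Binomial.C; simpl; lra|].
  rewrite central_binom_half_succ, S_INR.
  set (b := Binomial.C (2 * N) N * (/ 2) ^ (2 * N)) in *.
  pose proof (pos_INR N) as HN.
  assert (Hratio : ((2 * INR N + 1) / (2 * INR N + 2)) ^ 2 * (2 * (INR N + 1) + 1)
                   <= 2 * INR N + 1).
  { apply (Rmult_le_reg_r ((2 * INR N + 2) ^ 2)); [apply pow_lt; lra|].
    replace (((2 * INR N + 1) / (2 * INR N + 2)) ^ 2 * (2 * (INR N + 1) + 1) * (2 * INR N + 2) ^ 2)
      with ((2 * INR N + 1) ^ 2 * (2 * INR N + 3)) by (field; lra).
    nra. }
  replace ((b * ((2 * INR N + 1) / (2 * INR N + 2))) ^ 2 * (2 * (INR N + 1) + 1))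
    with (b ^ 2 * (((2 * INR N + 1) / (2 * INR N + 2)) ^ 2 * (2 * (INR N + 1) + 1))) by ring.
  apply Rle_trans with (b ^ 2 * (2 * INR N + 1)); [|exact IH].
  apply Rmult_le_compat_l; [apply pow2_ge_0|exact Hratio].
Qed.

Lemma binom_nonneg l i : 0 <= Binomial.C l i.
Proof.
  unfold Binomial.C. apply Rle_mult_inv_pos; [apply pos_INR|].
  apply Rmult_lt_0_compat; apply INR_fact_lt_0.
Qed.

(* Pascal's rule makes [i |-> C(l, i) / 2^l] an average of the previous row, so its maximum
   does not increase with [l]; at [l = 2N] the maximum is the central term.  The hypothesis
   [i <= l] matters: Stdlib's [C l i] is [l! / i!], not [0], when [i > l]. *)
Lemma binom_half_le_central N l i : (2 * N <= l)%nat -> (i <= l)%nat ->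
  Binomial.C l i * (/ 2) ^ l <= Binomial.C (2 * N) N * (/ 2) ^ (2 * N).
Proof.
  intros Hl. revert i. induction Hl as [|l Hl IH]; intros i Hi.
  - apply Rmult_le_compat_r; [apply pow_le; lra|now apply C_maj].
  - assert (Hedge : (/ 2) ^ S l <= Binomial.C (2 * N) N * (/ 2) ^ (2 * N)).
    { eapply Rle_trans; [|apply (IH 0%nat); lia]. rewrite C_n_0.
      change ((/ 2) ^ S l) with (/ 2 * (/ 2) ^ l). pose proof (pow_le (/ 2) l ltac:(lra)). lra. }
    destruct i as [|i]; [now rewrite C_n_0, Rmult_1_l|].
    destruct (Nat.eq_dec i l) as [->|Hil]; [now rewrite C_n_n, Rmult_1_l|].
    rewrite <- pascal by lia. change ((/ 2) ^ S l) with (/ 2 * (/ 2) ^ l).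
    pose proof (IH i ltac:(lia)). pose proof (IH (S i) ltac:(lia)). lra.
Qed.

Lemma binom_half_vanish eps : 0 < eps ->
  exists L, forall l i, (L <= l)%nat -> (i <= l)%nat -> Binomial.C l i * (/ 2) ^ l <= eps.
Proof.
  intros Heps. destruct (INR_archimed (eps ^ 2) 1) as [N HN]; [apply pow_lt; lra|].
  exists (2 * N)%nat. intros l i Hl Hi.
  eapply Rle_trans; [now apply (binom_half_le_central N)|].
  set (b := Binomial.C (2 * N) N * (/ 2) ^ (2 * N)).
  pose proof (central_binom_half_sq_le N) as Hb. fold b in Hb.
  assert (Hb0 : 0 <= b) by (apply Rmult_le_pos; [apply binom_nonneg|apply pow_le; lra]).
  pose proof (pos_INR N). destruct (Rle_or_lt b eps) as [|Hlt]; [assumption|].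
  assert (eps ^ 2 <= b ^ 2) by (apply pow_incr; lra).
  assert (0 < eps ^ 2) by (apply pow_lt; lra). nra.
Qed.

Definition mix (al : R) (f g : nat -> R) (k : nat) : R := al * f k + (1 - al) * g k.

Lemma is_distr_mix al f g : 0 <= al <= 1 -> is_distr f -> is_distr g -> is_distr (mix al f g).
Proof.
  intros Hal [Hf Hfs] [Hg Hgs]. split.
  - intros k. unfold mix. pose proof (Hf k). pose proof (Hg k). nra.
  - replace 1 with (al * 1 + (1 - al) * 1) by ring.
    exact (is_series_plus _ _ _ _ (is_series_Rmult_l al _ _ Hfs) (is_series_Rmult_l (1 - al) _ _ Hgs)).
Qed.

Lemma pgf_mix al f g t : is_distr f -> is_distr g -> 0 <= t <= 1 ->
  pgf (mix al f g) t = al * pgf f t + (1 - al) * pgf g t.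
Proof.
  intros Hf Hg Ht. apply is_series_unique.
  apply (is_series_ext (fun k => al * (f k * t ^ k) + (1 - al) * (g k * t ^ k))).
  - intros k. unfold mix. simpl. ring.
  - exact (is_series_plus _ _ _ _ (is_series_Rmult_l al _ _ (pgf_is_series f t Hf Ht))
                                  (is_series_Rmult_l (1 - al) _ _ (pgf_is_series g t Hg Ht))).
Qed.

Definition mix_pow_expansion (al : R) (f g : nat -> R) (j k : nat) : R :=
  sum_f_R0 (fun l => Binomial.C j l * al ^ l * (1 - al) ^ (j - l) *
                     conv (pow_coef f l) (pow_coef g (j - l)) k) j.

Lemma is_series_mix_pow_expansion al f g j t : is_distr f -> is_distr g -> 0 <= t <= 1 ->
  is_series (fun k => mix_pow_expansion al f g j k * t ^ k) ((al * pgf f t + (1 - al) * pgf g t) ^ j).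
Proof.
  intros Hf Hg Ht.
  apply (is_series_ext (fun k => sum_f_R0 (fun l => Binomial.C j l * al ^ l * (1 - al) ^ (j - l) *
                     (conv (pow_coef f l) (pow_coef g (j - l)) k * t ^ k)) j)).
  - intros k. unfold mix_pow_expansion. simpl. rewrite (Rmult_comm (sum_f_R0 _ _)), scal_sum.
    apply sum_eq. intros l _. ring.
  - rewrite binomial.
    rewrite (sum_eq _ (fun l => Binomial.C j l * al ^ l * (1 - al) ^ (j - l) *
                                (pgf f t ^ l * pgf g t ^ (j - l))))
      by (intros l _; rewrite !Rpow_mult_distr; ring).
    apply (is_series_sum_f_R0 (fun l k => _ * (conv (pow_coef f l) (pow_coef g (j - l)) k * t ^ k))).
    intros l. apply is_series_Rmult_l.
    apply is_series_conv; [intros; apply pow_coef_nonneg, Hf|intros; apply pow_coef_nonneg, Hg|lra|..];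
      now apply is_series_pow_coef.
Qed.

Lemma pow_coef_mix al f g j k : 0 <= al <= 1 -> is_distr f -> is_distr g ->
  pow_coef (mix al f g) j k = mix_pow_expansion al f g j k.
Proof.
  intros Hal Hf Hg. revert k. apply distr_eq_of_pgf.
  - now apply is_distr_pow_coef, is_distr_mix.
  - split.
    + intros k. apply cond_pos_sum. intros l. apply Rmult_le_pos.
      * pose proof (binom_nonneg j l). pose proof (pow_le al l (proj1 Hal)).
        pose proof (pow_le (1 - al) (j - l) ltac:(lra)). apply Rmult_le_pos; [apply Rmult_le_pos|]; lra.
      * apply conv_nonneg; intros; apply pow_coef_nonneg; [apply Hf|apply Hg].
    + pose proof (is_series_mix_pow_expansion al f g j 1 Hf Hg ltac:(lra)) as H.
      rewrite !pgf_1 in H by assumption. replace (al * 1 + (1 - al) * 1) with 1 in H by ring.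
      rewrite pow1 in H. refine (is_series_ext _ _ _ _ H). intros k. simpl. rewrite pow1. ring.
  - intros t Ht. rewrite pgf_pow_coef, pgf_mix by (auto using is_distr_mix; lra).
    symmetry. apply is_series_unique, is_series_mix_pow_expansion; auto; lra.
Qed.

Definition two_point (u v : nat) : nat -> R := mix (/ 2) (dirac u) (dirac v).

Lemma sum_dirac_le (w : nat -> R) (pos : nat -> nat) H l m :
  (forall i j, (i <= l)%nat -> (j <= l)%nat -> pos i = pos j -> i = j) ->
  (forall i, (i <= l)%nat -> 0 <= w i <= H) ->
  sum_f_R0 (fun i => w i * dirac (pos i) m) l <= H.
Proof.
  revert m. induction l as [|l IH]; intros m Hinj Hw.
  - simpl. pose proof (Hw 0%nat (le_n 0)). unfold dirac. destruct (Nat.eqb m (pos 0%nat)); lra.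
  - simpl. pose proof (Hw (S l) (le_n _)) as HwS. unfold dirac at 2.
    destruct (Nat.eqb_spec m (pos (S l))) as [->|Hm].
    + rewrite (sum_eq _ (fun _ => 0)); [rewrite sum_cte; lra|].
      intros i Hi. unfold dirac. destruct (Nat.eqb_spec (pos (S l)) (pos i)) as [E|]; [|ring].
      specialize (Hinj (S l) i (le_n _) ltac:(lia) E). lia.
    + rewrite Rmult_0_r, Rplus_0_r. apply IH; intros; [apply Hinj|apply Hw]; auto.
Qed.

Lemma pow_coef_two_point u v l m : pow_coef (two_point u v) l m =
  sum_f_R0 (fun i => Binomial.C l i * (/ 2) ^ l * dirac (u * i + v * (l - i)) m) l.
Proof.
  unfold two_point. rewrite pow_coef_mix by (auto using is_distr_dirac; lra).
  apply sum_eq. intros i Hi.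
  replace (conv (pow_coef (dirac u) i) (pow_coef (dirac v) (l - i)) m)
    with (conv (dirac (u * i)) (dirac (v * (l - i))) m)
    by (apply sum_eq; intros; now rewrite !pow_coef_dirac).
  rewrite conv_dirac. replace (1 - / 2) with (/ 2) by field.
  rewrite (Rmult_assoc _ ((/ 2) ^ i)), <- pow_add. now replace (i + (l - i))%nat with l by lia.
Qed.

Lemma pow_coef_two_point_le u v l m H : (u < v)%nat ->
  (forall i, (i <= l)%nat -> Binomial.C l i * (/ 2) ^ l <= H) -> pow_coef (two_point u v) l m <= H.
Proof.
  intros Huv HH. rewrite pow_coef_two_point. apply sum_dirac_le.
  - intros i j Hi Hj E. nia.
  - intros i Hi. split; [apply Rmult_le_pos; [apply binom_nonneg|apply pow_le; lra]|now apply HH].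
Qed.

Lemma distr_two_atoms a : is_distr a -> (forall k, a k < 1) ->
  exists u v, (u < v)%nat /\ 0 < a u /\ 0 < a v.
Proof.
  intros [Ha Hs] Ha1.
  assert (Hnot_point : forall w, ~ (forall k, k <> w -> a k = 0)).
  { intros w Hw.
    pose proof (is_series_Rmult_l (a w) _ _ (is_series_dirac w)) as E. rewrite Rmult_1_r in E.
    assert (Hw1 : a w = 1).
    { rewrite <- (is_series_unique a 1 Hs). symmetry. apply is_series_unique.
      refine (is_series_ext _ _ _ _ E). intros k. unfold dirac. simpl.
      destruct (Nat.eqb_spec k w) as [->|Hk]; [ring|rewrite (Hw k Hk); ring]. }
    specialize (Ha1 w). lra. }
  assert (Hzero : forall k, ~ 0 < a k -> a k = 0) by (intros k Hk; specialize (Ha k); lra).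
  destruct (classic (exists u, 0 < a u)) as [[u Hu]|Hno].
  2:{ exfalso. apply (Hnot_point 0%nat). intros k _. apply Hzero. intros Hk. apply Hno. now exists k. }
  destruct (classic (exists v, v <> u /\ 0 < a v)) as [[v [Hvu Hv]]|Hno].
  2:{ exfalso. apply (Hnot_point u). intros k Hk. apply Hzero. intros Hk'. apply Hno. now exists k. }
  destruct (Nat.lt_total u v) as [Huv|[Huv|Huv]]; [exists u, v|lia|exists v, u]; auto.
Qed.

Lemma distr_split_two_point a u v : is_distr a -> (u < v)%nat -> 0 < a u -> 0 < a v -> a u < 1 ->
  exists al nu, 0 < al < 1 /\ is_distr nu /\ forall k, a k = mix al (two_point u v) nu k.
Proof.
  intros Ha Huv Hu Hv Hu1. set (al := Rmin (a u) (a v)).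
  assert (Hal_u : al <= a u) by apply Rmin_l. assert (Hal_v : al <= a v) by apply Rmin_r.
  assert (Hal : 0 < al < 1) by (split; [now apply Rmin_pos|lra]).
  exists al, (fun k => / (1 - al) * (a k + - al * two_point u v k)). split; [exact Hal|split].
  - split.
    + intros k. apply Rmult_le_pos; [apply Rlt_le, Rinv_0_lt_compat; lra|].
      pose proof (proj1 Ha k). unfold two_point, mix, dirac.
      destruct (Nat.eqb_spec k u), (Nat.eqb_spec k v); subst; lia || lra.
    + replace 1 with (/ (1 - al) * (1 + - al * 1)) at 1 by (field; lra).
      apply is_series_Rmult_l, (is_series_plus a), is_series_Rmult_l; [apply Ha|].
      apply is_distr_mix; [lra|apply is_distr_dirac..].
  - intros k. unfold mix at 1. field. lra.
Qed.

Lemma binom_weights_sum_le j al e L (h : nat -> R) : 0 <= al <= 1 ->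
  (forall l, h l <= e + 2 ^ L * (/ 2) ^ l) ->
  sum_f_R0 (fun l => Binomial.C j l * al ^ l * (1 - al) ^ (j - l) * h l) j
  <= e + 2 ^ L * (1 - al / 2) ^ j.
Proof.
  intros Hal Hh.
  apply Rle_trans with
    (sum_f_R0 (fun l => Binomial.C j l * al ^ l * (1 - al) ^ (j - l) * (e + 2 ^ L * (/ 2) ^ l)) j).
  - apply sum_Rle. intros l _. apply Rmult_le_compat_l; [|apply Hh].
    pose proof (binom_nonneg j l). pose proof (pow_le al l (proj1 Hal)).
    pose proof (pow_le (1 - al) (j - l) ltac:(lra)). apply Rmult_le_pos; [apply Rmult_le_pos|]; lra.
  - right. replace (1 - al / 2) with (al * / 2 + (1 - al)) by field.
    replace e with (e * (al + (1 - al)) ^ j) at 1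
      by (replace (al + (1 - al)) with 1 by ring; rewrite pow1; ring).
    rewrite !binomial, !scal_sum, <- sum_plus. apply sum_eq. intros l _.
    rewrite Rpow_mult_distr. ring.
Qed.

Lemma binom_half_le_tail L e l i : 0 <= e ->
  (forall l i, (L <= l)%nat -> (i <= l)%nat -> Binomial.C l i * (/ 2) ^ l <= e) ->
  (i <= l)%nat -> Binomial.C l i * (/ 2) ^ l <= e + 2 ^ L * (/ 2) ^ l.
Proof.
  intros He HL Hi. assert (0 <= 2 ^ L * (/ 2) ^ l) by (apply Rmult_le_pos; apply pow_le; lra).
  destruct (Nat.le_gt_cases L l) as [HLl|HlL]; [pose proof (HL l i HLl Hi); lra|].
  pose proof (binom_half_le_central 0 l i ltac:(lia) Hi) as H1. rewrite C_n_0 in H1. simpl in H1.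
  assert (E : 2 ^ L * (/ 2) ^ l = 2 ^ (L - l)).
  { replace L with (L - l + l)%nat at 1 by lia.
    rewrite pow_add, Rmult_assoc, <- Rpow_mult_distr, Rinv_r, pow1 by lra. ring. }
  pose proof (pow_R1_Rle 2 (L - l) ltac:(lra)). lra.
Qed.

(* In the binomial expansion, the point masses of the term of index [l] are bounded by those of
   the fair binomial law [C(l, .) / 2^l], which are small for [l >= L]; the total weight of the
   terms with [l < L] is [O((1 - al/2)^j)]. *)
Lemma pow_coef_mix_two_point_le al nu u v L e j k : 0 <= al <= 1 -> is_distr nu ->
  (u < v)%nat -> 0 <= e ->
  (forall l i, (L <= l)%nat -> (i <= l)%nat -> Binomial.C l i * (/ 2) ^ l <= e) ->
  pow_coef (mix al (two_point u v) nu) j k <= e + 2 ^ L * (1 - al / 2) ^ j.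
Proof.
  intros Hal Hnu Huv He HL.
  assert (Hbeta : is_distr (two_point u v)) by (apply is_distr_mix; [lra|apply is_distr_dirac..]).
  rewrite pow_coef_mix by assumption.
  apply (binom_weights_sum_le j al e L (fun l => conv (pow_coef (two_point u v) l) (pow_coef nu (j - l)) k));
    [exact Hal|]. intros l.
  apply conv_le; [|now apply is_distr_pow_coef]. intros m.
  split; [apply pow_coef_nonneg, Hbeta|].
  apply pow_coef_two_point_le; [exact Huv|]. intros i Hi. now apply binom_half_le_tail.
Qed.

Lemma pow_coef_vanish a : is_distr a -> (forall k, a k < 1) ->
  forall eps, 0 < eps -> exists J, forall j k, (J <= j)%nat -> pow_coef a j k <= eps.
Proof.
  intros Ha Ha1 eps Heps.
  destruct (distr_two_atoms a Ha Ha1) as (u & v & Huv & Hu & Hv).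
  destruct (distr_split_two_point a u v Ha Huv Hu Hv (Ha1 u)) as (al & nu & Hal & Hnu & Hsplit).
  destruct (binom_half_vanish (eps / 2)) as [L HL]; [lra|].
  assert (H2L : 0 < 2 ^ L) by (apply pow_lt; lra).
  destruct (pow_lt_1_zero (1 - al / 2)) with (y := eps / 2 / 2 ^ L) as [J HJ];
    [rewrite Rabs_pos_eq; lra|apply Rdiv_lt_0_compat; lra|].
  exists J. intros j k Hj.
  rewrite (pow_coef_ext a (mix al (two_point u v) nu)) by exact Hsplit.
  eapply Rle_trans; [apply (pow_coef_mix_two_point_le al nu u v L (eps / 2)); auto; lra|].
  specialize (HJ j Hj). rewrite Rabs_pos_eq in HJ by (apply pow_le; lra).
  apply (Rmult_lt_compat_l (2 ^ L)) in HJ; [|exact H2L].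
  replace (2 ^ L * (eps / 2 / 2 ^ L)) with (eps / 2) in HJ by (field; lra). lra.
Qed.

(** * Vanishing of the supremum *)

(* For [j < J] use [c_j <= c_j t^j / t^J]; for [j >= J] the coefficients of [a^j] are small. *)
Lemma comp_coef_pos_le_pgf c a eps J t k : is_distr c -> is_distr a -> 0 < t <= 1 -> 0 <= eps ->
  (forall j k, (J <= j)%nat -> pow_coef a j k <= eps) ->
  comp_coef c a (S k) <= eps + (pgf c t - c 0%nat) / t ^ J.
Proof.
  intros Hc Ha Ht Heps HJ. assert (HtJ : 0 < t ^ J) by (apply pow_lt; lra).
  replace (eps + (pgf c t - c 0%nat) / t ^ J)
    with (eps * 1 + / t ^ J * (pgf c t - c 0%nat * t ^ 0)) by (simpl; field; lra).
  apply (is_series_le (fun j => c j * pow_coef a j (S k))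
           (fun j => eps * c j + / t ^ J * (c j * t ^ j - c 0%nat * dirac 0 j * t ^ j))).
  - intros j. pose proof (proj1 Hc j) as Hcj.
    pose proof (is_distr_le1 _ (S k) (is_distr_pow_coef a j Ha)) as Hp.
    destruct j as [|j]; [unfold dirac; simpl; ring_simplify; nra|].
    unfold dirac. simpl Nat.eqb. rewrite Rmult_0_r, Rmult_0_l, Rminus_0_r.
    assert (0 <= / t ^ J * (c (S j) * t ^ S j)) by
      (apply Rmult_le_pos; [apply Rlt_le, Rinv_0_lt_compat, HtJ|apply Rmult_le_pos; [lra|apply pow_le; lra]]).
    destruct (Nat.le_gt_cases J (S j)) as [HJj|HJj].
    + pose proof (HJ (S j) (S k) HJj). nra.
    + assert (c (S j) <= / t ^ J * (c (S j) * t ^ S j)).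
      { apply (Rmult_le_reg_l (t ^ J)); [exact HtJ|].
        replace (t ^ J * (/ t ^ J * (c (S j) * t ^ S j))) with (c (S j) * t ^ S j) by (field; lra).
        rewrite Rmult_comm. apply Rmult_le_compat_l; [exact Hcj|].
        apply Rle_pow_le1; [lra|lia]. }
      nra.
  - apply Series_correct, ex_series_comp_coef; assumption.
  - exact (is_series_plus _ _ _ _ (is_series_Rmult_l eps _ _ (proj2 Hc))
      (is_series_Rmult_l _ _ _ (is_series_minus _ _ _ _ (pgf_is_series c t Hc ltac:(lra))
                                                  (is_series_dirac_pow 0 (c 0%nat) t)))).
Qed.

Lemma bounded_seq_step_le (x : nat -> R) M : (forall n, x n <= M) ->
  forall eta, 0 < eta -> exists n, x (S n) - x n <= eta.
Proof.
  intros HM eta Heta. destruct (classic (exists n, x (S n) - x n <= eta)) as [|Hno]; [assumption|].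
  exfalso. assert (Hgrow : forall n, x 0%nat + INR n * eta <= x n).
  { induction n as [|n IH]; [simpl; lra|].
    assert (~ x (S n) - x n <= eta) by (intros H; apply Hno; now exists n).
    rewrite S_INR. lra. }
  destruct (INR_archimed eta (M - x 0%nat) Heta) as [N HN].
  specialize (Hgrow N). specialize (HM N). lra.
Qed.

(* Since [a_0 = 0], [a(x) <= a_1 x + (1 - a_1) x^2]. *)
Lemma pgf_le_contract a x : is_distr a -> a 0%nat = 0 -> 0 <= x <= / 2 ->
  pgf a x <= (1 + a 1%nat) / 2 * x.
Proof.
  intros Ha Ha0 Hx. pose proof (is_distr_le1 a 1 Ha) as Ha1.
  apply Rle_trans with (1 * x ^ 2 + a 1%nat * (x - x ^ 2) * 1).
  2:{ assert (0 <= (1 - a 1%nat) * (x * (/ 2 - x))) by (apply Rmult_le_pos; [|apply Rmult_le_pos]; lra).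
      simpl. nra. }
  apply (is_series_le (fun k => a k * x ^ k) (fun k => a k * x ^ 2 + a 1%nat * (x - x ^ 2) * dirac 1 k));
    [|apply pgf_is_series; auto; lra|].
  - intros [|[|k]]; unfold dirac; simpl Nat.eqb; [rewrite Ha0; simpl; lra|simpl; lra|].
    pose proof (proj1 Ha (S (S k))).
    assert (x ^ S (S k) <= x ^ 2) by (apply Rle_pow_le1; [lra|lia]).
    nra.
  - exact (is_series_plus _ _ _ _ (is_series_scal_r (x ^ 2) _ _ (proj2 Ha))
                                  (is_series_Rmult_l _ _ _ (is_series_dirac 1))).
Qed.

Lemma iter_pgf_half_le a m : is_distr a -> a 0%nat = 0 ->
  Nat.iter m (pgf a) (/ 2) <= / 2 * ((1 + a 1%nat) / 2) ^ m.
Proof.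
  intros Ha Ha0. pose proof (is_distr_le1 a 1 Ha) as Ha1.
  induction m as [|m IH]; [simpl; lra|].
  pose proof (iter_pgf_bounds a m (/ 2) Ha ltac:(lra)).
  pose proof (pow_le1 ((1 + a 1%nat) / 2) m ltac:(lra)).
  rewrite Nat.iter_succ. eapply Rle_trans; [apply pgf_le_contract; auto; nra|].
  simpl pow. nra.
Qed.

(* With [t = a_0 > 0] the gap is an increment of the bounded sequence [p^[n+1](0)]; if
   [a_0 = 0], the iterates contract on [[0, 1/2]]. *)
Lemma piter_pgf_gap_small a : is_distr a -> (forall k, a k < 1) ->
  exists t, 0 < t <= 1 /\ forall eta, 0 < eta -> exists n, pgf (piter a n) t - piter a n 0%nat <= eta.
Proof.
  intros Ha Ha1. destruct (Rle_lt_or_eq_dec 0 (a 0%nat) (proj1 Ha 0%nat)) as [Hpos|Hzero].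
  - exists (a 0%nat). split; [split; [exact Hpos|left; apply Ha1]|]. intros eta Heta.
    destruct (bounded_seq_step_le (fun n => piter a n 0%nat) 1
                (fun n => proj2 (is_distr_le1 _ 0 (is_distr_piter a n Ha))) eta Heta) as [n Hn].
    exists n. now rewrite <- comp_coef_0, <- piter_S_comp_coef.
  - exists (/ 2). split; [lra|]. intros eta Heta.
    pose proof (is_distr_le1 a 1 Ha) as Ha1'. specialize (Ha1 1%nat).
    destruct (pow_lt_1_zero ((1 + a 1%nat) / 2)) with (y := eta) as [N HN];
      [rewrite Rabs_pos_eq; lra|exact Heta|].
    exists N. specialize (HN (S N) ltac:(lia)). rewrite Rabs_pos_eq in HN by (apply pow_le; lra).
    pose proof (iter_pgf_half_le a (S N) Ha (eq_sym Hzero)).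
    pose proof (is_distr_le1 _ 0 (is_distr_piter a N Ha)).
    rewrite pgf_piter by (auto; lra). lra.
Qed.

Lemma sup_pos_coef_piter_small a : is_distr a -> (forall k, a k < 1) ->
  forall eps, 0 < eps -> exists n, real (sup_pos_coef (piter a n)) <= eps.
Proof.
  intros Ha Ha1 eps Heps.
  destruct (pow_coef_vanish a Ha Ha1 (eps / 2)) as [J HJ]; [lra|].
  destruct (piter_pgf_gap_small a Ha Ha1) as (t & Ht & Hgap).
  assert (HtJ : 0 < t ^ J) by (apply pow_lt; lra).
  destruct (Hgap (eps / 2 * t ^ J)) as [n Hn]; [apply Rmult_lt_0_compat; lra|].
  exists (S n). apply sup_pos_coef_le; [now apply is_distr_piter|]. intros k.
  rewrite piter_S_comp_coef by exact Ha.
  eapply Rle_trans; [apply (comp_coef_pos_le_pgf _ a (eps / 2) J t); auto using is_distr_piter; lra|].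
  assert ((pgf (piter a n) t - piter a n 0%nat) / t ^ J <= eps / 2).
  { apply (Rmult_le_reg_r (t ^ J)); [exact HtJ|].
    unfold Rdiv. rewrite Rmult_assoc, Rinv_l, Rmult_1_r by lra. exact Hn. }
  lra.
Qed.

Lemma is_lim_seq_decr_0 (u : nat -> R) : (forall n, 0 <= u n) -> (forall n, u (S n) <= u n) ->
  (forall eps, 0 < eps -> exists n, u n <= eps) -> is_lim_seq u 0.
Proof.
  intros H0 Hdecr Hsmall. apply is_lim_seq_spec. intros [eps Heps]. simpl.
  destruct (Hsmall (eps / 2)) as [N HN]; [lra|].
  exists N. intros n Hn. rewrite Rminus_0_r, Rabs_pos_eq by apply H0.
  assert (u n <= u N) by (induction Hn as [|m Hm IH]; [lra|specialize (Hdecr m); lra]).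
  lra.
Qed.

Theorem theorem3 (a : nat -> R)
  (ha : forall k, 0 <= a k < 1)
  (hsum : is_series a 1) :
  (forall n, piter a n 0%nat <= piter a (S n) 0%nat) /\
  (forall n, Rbar_le (sup_pos_coef (piter a (S n))) (sup_pos_coef (piter a n))) /\
  (forall n, is_finite (sup_pos_coef (piter a n))) /\
  is_lim_seq (fun n => sup_pos_coef (piter a n)) (Finite 0).
Proof.
  assert (Ha : is_distr a) by (split; [apply ha|exact hsum]).
  assert (Ha1 : forall k, a k < 1) by apply ha.
  assert (Hfin : forall n, is_finite (sup_pos_coef (piter a n)))
    by (intros n; apply sup_pos_coef_finite, is_distr_piter, Ha).
  split; [|split; [|split]].
  - intros n. now apply piter_coef0_le_succ.
  - intros n. rewrite <- (Hfin n), <- (Hfin (S n)). now apply sup_pos_coef_piter_succ_le.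
  - exact Hfin.
  - apply is_lim_seq_decr_0.
    + intros n. pose proof (is_distr_le1 _ 1 (is_distr_piter a n Ha)).
      pose proof (sup_pos_coef_ge _ 0 (is_distr_piter a n Ha)). lra.
    + intros n. now apply sup_pos_coef_piter_succ_le.
    + now apply sup_pos_coef_piter_small.
Qed.
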